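(* Let $P(k)=C_{p0}T_{p0}^k-C_mT_m^k$ be a high pair function (so $C_{p0},C_m>0$ and $0<T_m<T_{p0}<1$), and let $C_{pi}>0$, $T_{pi}$ with $T_m<T_{pi}<1$, $i=1,\dots,N$. Then the total function $S(k)=P(k)+\sum_{i=1}^N C_{pi}T_{pi}^k$ has exactly one point of abscissa intersection, exactly one maximum and exactly one inflection point; it is concave to the left of the inflection point and convex to the right of it, and $S(k)\to 0$ as $k\to\infty$.
   Context: A high pair function is $C_pT_p^k-C_mT_m^k$ with $C_p,C_m>0$ and $0<T_m<T_p<1$, real variable $k$. *)

From Stdlib Require Import Reals.
From Coquelicot Require Import Coquelicot.
Open Scope R_scope.

Fixpoint sum1N (f : nat -> R) (n : nat) : R :=
  match n with
  | O => 0
  | S m => sum1N f m + f (S m)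
  end.

Definition total_fun (Cp0 Tp0 Cm Tm : R) (Cp Tp : nat -> R) (N : nat) (k : R) : R :=
  Cp0 * Rpower Tp0 k - Cm * Rpower Tm k + sum1N (fun i => Cp i * Rpower (Tp i) k) N.

Definition convex_on (I : R -> Prop) (f : R -> R) : Prop :=
  forall x y t, I x -> I y -> 0 <= t <= 1 ->
    f (t * x + (1 - t) * y) <= t * f x + (1 - t) * f y.

Definition concave_on (I : R -> Prop) (f : R -> R) : Prop :=
  convex_on I (fun x => - f x).

Definition local_max (f : R -> R) (x : R) : Prop :=
  exists eps, 0 < eps /\ forall y, Rabs (y - x) < eps -> f y <= f x.

Definition inflection_point (f : R -> R) (c : R) : Prop :=
  exists eps, 0 < eps /\
    ((concave_on (fun x => c - eps < x <= c) f /\ convex_on (fun x => c <= x < c + eps) f)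
  \/ (convex_on (fun x => c - eps < x <= c) f /\ concave_on (fun x => c <= x < c + eps) f)).

(* Write [L = ln T] for each base, so that the [n]-th derivative of [S] is
   [sum_j C_j L_j^n exp (k L_j) - Cm Lm^n exp (k Lm)] with all [L_j < 0] and
   [Lm] the smallest.  Multiplying by [(-1)^n] and dividing by [exp (k Lm)]
   gives [sum_j C_j |L_j|^n exp (k (L_j - Lm)) - Cm |Lm|^n], a strictly
   increasing function going from [-Cm |Lm|^n] to [+oo].  Hence [S], [-S'] and
   [S''] each change sign exactly once, from negative to positive: one zero,
   one maximum, and one inflection point with concavity to its left and
   convexity to its right. *)

From Stdlib Require Import Reals Lra Lia.
From Coquelicot Require Import Coquelicot.
Open Scope R_scope.

Lemma sum1N_ext f g n :
  (forall i, (1 <= i <= n)%nat -> f i = g i) -> sum1N f n = sum1N g n.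
Proof.
  induction n as [|n IH]; intros Hfg; simpl; [reflexivity|].
  rewrite IH, Hfg; auto with arith; intros i Hi; apply Hfg; lia.
Qed.

Lemma sum1N_scal c f n : sum1N (fun i => c * f i) n = c * sum1N f n.
Proof. induction n as [|n IH]; simpl; [|rewrite IH]; ring. Qed.

Lemma sum1N_zero n : sum1N (fun _ => 0) n = 0.
Proof. induction n as [|n IH]; simpl; [|rewrite IH]; ring. Qed.

Lemma sum1N_nonneg f n : (forall i, (1 <= i <= n)%nat -> 0 <= f i) -> 0 <= sum1N f n.
Proof.
  induction n as [|n IH]; intros Hf; simpl; [lra|].
  assert (0 <= sum1N f n) by (apply IH; intros i Hi; apply Hf; lia).
  assert (0 <= f (S n)) by (apply Hf; lia).
  lra.
Qed.

Lemma is_derive_sum1N (F : nat -> R -> R) (dF : nat -> R) n k :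
  (forall i, (1 <= i <= n)%nat -> is_derive (F i) k (dF i)) ->
  is_derive (fun k => sum1N (fun i => F i k) n) k (sum1N dF n).
Proof.
  induction n as [|n IH]; intros HF; simpl.
  - apply is_derive_Reals, derivable_pt_lim_const.
  - apply (is_derive_plus (fun k => sum1N (fun i => F i k) n) (F (S n)));
      [apply IH; intros i Hi|]; apply HF; lia.
Qed.

Lemma is_lim_sum1N (F : nat -> R -> R) (l : nat -> R) x n :
  (forall i, (1 <= i <= n)%nat -> is_lim (F i) x (l i)) ->
  is_lim (fun k => sum1N (fun i => F i k) n) x (sum1N l n).
Proof.
  induction n as [|n IH]; intros HF; simpl.
  - apply is_lim_const.
  - apply (is_lim_plus' (fun k => sum1N (fun i => F i k) n) (F (S n)));
      [apply IH; intros i Hi|]; apply HF; lia.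
Qed.

Lemma is_lim_exp_mul_0 x (d : R) :
  is_Rbar_mult x d m_infty -> is_lim (fun k => exp (k * d)) x 0.
Proof.
  intros Hxd.
  apply (is_lim_comp exp (fun k => k * d) x 0 m_infty); [apply is_lim_exp_m| |].
  - rewrite <- (is_Rbar_mult_unique _ _ _ Hxd). apply is_lim_scal_r, is_lim_id.
  - apply filter_forall. discriminate.
Qed.

Lemma is_lim_exp_mul_p_infty x (d : R) :
  is_Rbar_mult x d p_infty -> is_lim (fun k => exp (k * d)) x p_infty.
Proof.
  intros Hxd.
  apply (is_lim_comp exp (fun k => k * d) x p_infty p_infty); [apply is_lim_exp_p| |].
  - rewrite <- (is_Rbar_mult_unique _ _ _ Hxd). apply is_lim_scal_r, is_lim_id.
  - apply filter_forall. discriminate.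
Qed.

Lemma deriv_pos_increasing f f' a b x y :
  (forall z, is_derive f z (f' z)) -> (forall z, a < z < b -> 0 < f' z) ->
  a <= x -> x < y -> y <= b -> f x < f y.
Proof.
  intros Hf Hpos Hax Hxy Hyb.
  destruct (MVT_cor2 f f' x y) as [c [Hc Hcxy]];
    [lra | intros; apply is_derive_Reals, Hf |].
  assert (0 < f' c) by (apply Hpos; lra).
  nra.
Qed.

Definition expsum (a d : nat -> R) (n : nat) (k : R) : R :=
  a 0%nat * exp (k * d 0%nat) + sum1N (fun i => a i * exp (k * d i)) n.

Lemma expsum_ext a b d n k : (forall i, a i = b i) -> expsum a d n k = expsum b d n k.
Proof. intros Hab. unfold expsum. rewrite Hab. f_equal. apply sum1N_ext. intros i _. now rewrite Hab. Qed.

Lemma expsum_scal c a d n k : c * expsum a d n k = expsum (fun i => c * a i) d n k.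
Proof.
  unfold expsum. rewrite Rmult_plus_distr_l, <- sum1N_scal.
  f_equal; [ring|]. apply sum1N_ext. intros. ring.
Qed.

Lemma expsum_shift a d n s k :
  expsum a d n k = exp (k * s) * expsum a (fun i => d i - s) n k.
Proof.
  assert (Hexp : forall e, exp (k * e) = exp (k * s) * exp (k * (e - s))).
  { intros e. rewrite <- exp_plus. f_equal. ring. }
  unfold expsum. rewrite Rmult_plus_distr_l, <- sum1N_scal, Hexp.
  f_equal; [ring|]. apply sum1N_ext. intros i _. rewrite Hexp. ring.
Qed.

Lemma is_derive_expsum a d n k :
  is_derive (expsum a d n) k (expsum (fun i => a i * d i) d n k).
Proof.
  assert (Hterm : forall i, is_derive (fun k => a i * exp (k * d i)) k (a i * d i * exp (k * d i))).
  { intros i. auto_derive; [exact I | ring]. }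
  apply (is_derive_plus (fun k => a 0%nat * exp (k * d 0%nat))); [apply Hterm|].
  apply (is_derive_sum1N (fun i k => a i * exp (k * d i))). intros i _. apply Hterm.
Qed.

Lemma expsum_pos a d n k : (forall i, (i <= n)%nat -> 0 < a i) -> 0 < expsum a d n k.
Proof.
  intros Ha. unfold expsum.
  assert (0 < a 0%nat * exp (k * d 0%nat)) by (apply Rmult_lt_0_compat; [apply Ha; lia | apply exp_pos]).
  assert (0 <= sum1N (fun i => a i * exp (k * d i)) n).
  { apply sum1N_nonneg. intros i Hi. left. apply Rmult_lt_0_compat; [apply Ha; lia | apply exp_pos]. }
  lra.
Qed.

Lemma is_lim_expsum_0 a (d : nat -> R) n x :
  (forall i, (i <= n)%nat -> is_Rbar_mult x (d i) m_infty) -> is_lim (expsum a d n) x 0.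
Proof.
  intros Hd.
  assert (Hterm : forall i, (i <= n)%nat -> is_lim (fun k => a i * exp (k * d i)) x 0).
  { intros i Hi. replace (Finite 0) with (Rbar_mult (a i) 0) by (simpl; f_equal; ring).
    apply is_lim_scal_l, is_lim_exp_mul_0, Hd, Hi. }
  replace (Finite 0) with (Finite (0 + sum1N (fun _ => 0) n))
    by (rewrite sum1N_zero; f_equal; ring).
  apply is_lim_plus'; [apply Hterm; lia|].
  apply (is_lim_sum1N (fun i k => a i * exp (k * d i))). intros i Hi. apply Hterm. lia.
Qed.

Section PositiveExpsum.
Variables (a d : nat -> R) (n : nat).
Hypothesis Had : forall i, (i <= n)%nat -> 0 < a i /\ 0 < d i.

Lemma expsum_increasing x y : x < y -> expsum a d n x < expsum a d n y.
Proof.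
  intros Hxy. apply (deriv_pos_increasing _ (expsum (fun i => a i * d i) d n) x y); try lra.
  - intros z. apply is_derive_expsum.
  - intros z _. apply expsum_pos. intros i Hi. destruct (Had i Hi). nra.
Qed.

Lemma is_lim_expsum_p_infty : is_lim (expsum a d n) p_infty p_infty.
Proof.
  destruct (Had 0%nat) as [Ha0 Hd0]; [lia|].
  apply (is_lim_le_p_loc (fun k => a 0%nat * exp (k * d 0%nat))).
  - apply filter_forall. intros k. unfold expsum.
    assert (0 <= sum1N (fun i => a i * exp (k * d i)) n); [|lra].
    apply sum1N_nonneg. intros i Hi. left. apply Rmult_lt_0_compat; [apply Had; lia | apply exp_pos].
  - replace p_infty with (Rbar_mult (a 0%nat) p_infty) at 2
      by (apply is_Rbar_mult_unique, is_Rbar_mult_sym, is_Rbar_mult_p_infty_pos; exact Ha0).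
    apply is_lim_scal_l, is_lim_exp_mul_p_infty, is_Rbar_mult_p_infty_pos. exact Hd0.
Qed.

Lemma expsum_crosses B : 0 < B ->
  exists z, expsum a d n z = B /\
    (forall k, k < z -> expsum a d n k < B) /\ (forall k, z < k -> B < expsum a d n k).
Proof.
  intros HB.
  destruct (IVT_Rbar_incr (expsum a d n) m_infty p_infty 0 p_infty B) as [z [_ [_ Hz]]].
  - apply is_lim_expsum_0. intros i Hi. apply is_Rbar_mult_m_infty_pos, Had, Hi.
  - apply is_lim_expsum_p_infty.
  - intros x _ _. apply derivable_continuous_pt. eexists. apply is_derive_Reals, is_derive_expsum.
  - exact I.
  - now split.
  - exists z. split; [exact Hz|].
    split; intros k Hk; rewrite <- Hz; now apply expsum_increasing.
Qed.
End PositiveExpsum.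

Lemma ex_pos_le_both r1 r2 : 0 < r1 -> 0 < r2 -> exists m, 0 < m /\ m <= r1 /\ m <= r2.
Proof. intros. exists (Rmin r1 r2). split; [now apply Rmin_pos | split; [apply Rmin_l | apply Rmin_r]]. Qed.

Definition is_interval (I : R -> Prop) : Prop :=
  forall x y z, I x -> I y -> x <= z <= y -> I z.

Section SecondDerivative.
Variables f f' f'' : R -> R.
Hypothesis f_deriv : forall x, is_derive f x (f' x).
Hypothesis f'_deriv : forall x, is_derive f' x (f'' x).

(* Two mean value steps for [f] on [x, z] and [z, y], then one for [f'] between the two slopes. *)
Lemma chord_gap x y t : x < y -> 0 < t < 1 -> exists eta p, x < eta < y /\ 0 < p /\
  t * f x + (1 - t) * f y - f (t * x + (1 - t) * y) = p * f'' eta.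
Proof.
  intros Hxy Ht. set (z := t * x + (1 - t) * y).
  assert (Hz : x < z < y) by (unfold z; split; nra).
  destruct (MVT_cor2 f f' x z) as [a [Ha Hxa]]; [lra | intros; apply is_derive_Reals, f_deriv |].
  destruct (MVT_cor2 f f' z y) as [b [Hb Hzb]]; [lra | intros; apply is_derive_Reals, f_deriv |].
  destruct (MVT_cor2 f' f'' a b) as [c [Hc Hac]]; [lra | intros; apply is_derive_Reals, f'_deriv |].
  exists c, (t * (1 - t) * (y - x) * (b - a)). split; [lra|]. split.
  - apply Rmult_lt_0_compat; [apply Rmult_lt_0_compat; nra | lra].
  - assert (Hzx : z - x = (1 - t) * (y - x)) by (unfold z; ring).
    assert (Hyz : y - z = t * (y - x)) by (unfold z; ring).
    transitivity (t * (1 - t) * (y - x) * (f' b - f' a)); [|rewrite Hc; ring].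
    replace (t * f x + (1 - t) * f y - f z) with (t * - (f z - f x) + (1 - t) * (f y - f z)) by ring.
    rewrite Ha, Hb, Hzx, Hyz. ring.
Qed.

Lemma convex_on_deriv2_nonneg I :
  is_interval I -> (forall x, I x -> 0 <= f'' x) -> convex_on I f.
Proof.
  intros HI Hf'' x y t Ix Iy Ht.
  destruct (Req_dec t 0) as [->|Ht0].
  { replace (0 * x + (1 - 0) * y) with y by ring. lra. }
  destruct (Req_dec t 1) as [->|Ht1].
  { replace (1 * x + (1 - 1) * y) with x by ring. lra. }
  destruct (Rtotal_order x y) as [Hxy|[<-|Hyx]].
  - destruct (chord_gap x y t Hxy ltac:(lra)) as [eta [p [Heta [Hp Hgap]]]].
    assert (0 <= f'' eta) by (apply Hf'', (HI x y); auto; lra).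
    nra.
  - replace (t * x + (1 - t) * x) with x by ring. lra.
  - destruct (chord_gap y x (1 - t) Hyx ltac:(lra)) as [eta [p [Heta [Hp Hgap]]]].
    assert (0 <= f'' eta) by (apply Hf'', (HI y x); auto; lra).
    replace (1 - (1 - t)) with t in Hgap by ring.
    replace (t * x + (1 - t) * y) with ((1 - t) * y + t * x) by ring.
    nra.
Qed.

Lemma not_convex_on_deriv2_neg I x y : x < y -> I x -> I y ->
  (forall z, x < z < y -> f'' z < 0) -> ~ convex_on I f.
Proof.
  intros Hxy Ix Iy Hneg Hconv.
  destruct (chord_gap x y (1/2) Hxy ltac:(lra)) as [eta [p [Heta [Hp Hgap]]]].
  specialize (Hconv x y (1/2) Ix Iy ltac:(lra)). specialize (Hneg eta Heta).
  nra.
Qed.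
End SecondDerivative.

Section Concavity.
Variables f f' f'' : R -> R.
Hypothesis f_deriv : forall x, is_derive f x (f' x).
Hypothesis f'_deriv : forall x, is_derive f' x (f'' x).

Let opp_deriv : forall x, is_derive (fun x => - f x) x (- f' x).
Proof. intros x. apply (is_derive_opp f), f_deriv. Qed.

Let opp_deriv2 : forall x, is_derive (fun x => - f' x) x (- f'' x).
Proof. intros x. apply (is_derive_opp f'), f'_deriv. Qed.

Lemma concave_on_deriv2_nonpos I :
  is_interval I -> (forall x, I x -> f'' x <= 0) -> concave_on I f.
Proof.
  intros HI Hf''. apply (convex_on_deriv2_nonneg _ _ _ opp_deriv opp_deriv2); [exact HI|].
  intros x Ix. specialize (Hf'' x Ix). lra.
Qed.

Lemma not_concave_on_deriv2_pos I x y : x < y -> I x -> I y ->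
  (forall z, x < z < y -> 0 < f'' z) -> ~ concave_on I f.
Proof.
  intros Hxy Ix Iy Hpos.
  apply (not_convex_on_deriv2_neg _ _ _ opp_deriv opp_deriv2 I x y); auto.
  intros z Hz. specialize (Hpos z Hz). lra.
Qed.
End Concavity.

Section FirstDerivativeSignChange.
Variables (f f' : R -> R) (z : R).
Hypothesis f_deriv : forall x, is_derive f x (f' x).
Hypothesis f'_pos_left : forall x, x < z -> 0 < f' x.
Hypothesis f'_neg_right : forall x, z < x -> f' x < 0.

Lemma increasing_left_of x y : x < y <= z -> f x < f y.
Proof.
  intros Hxy. apply (deriv_pos_increasing f f' x z); auto; try lra.
  intros w Hw. apply f'_pos_left. lra.
Qed.

Lemma decreasing_right_of x y : z <= x < y -> f y < f x.
Proof.
  intros Hxy.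
  enough (- f x < - f y) by lra.
  apply (deriv_pos_increasing (fun x => - f x) (fun x => - f' x) z y); try lra.
  - intros w. apply (is_derive_opp f), f_deriv.
  - intros w Hw. specialize (f'_neg_right w ltac:(lra)). lra.
Qed.

Lemma local_max_iff x : local_max f x <-> x = z.
Proof.
  split.
  - intros [eps [Heps Hmax]].
    destruct (Rtotal_order x z) as [Hxz|[Hxz|Hzx]]; [exfalso | exact Hxz | exfalso].
    + destruct (ex_pos_le_both eps (z - x) Heps ltac:(lra)) as [m Hm].
      assert (f (x + m / 2) <= f x) by (apply Hmax; rewrite Rabs_right; lra).
      pose proof (increasing_left_of x (x + m / 2) ltac:(lra)). lra.
    + destruct (ex_pos_le_both eps (x - z) Heps ltac:(lra)) as [m Hm].
      assert (f (x - m / 2) <= f x) by (apply Hmax; rewrite Rabs_left; lra).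
      pose proof (decreasing_right_of (x - m / 2) x ltac:(lra)). lra.
  - intros ->. exists 1. split; [lra|]. intros y _.
    destruct (Rtotal_order y z) as [Hyz|[->|Hzy]]; [| lra |].
    + left. apply increasing_left_of. lra.
    + left. apply decreasing_right_of. lra.
Qed.
End FirstDerivativeSignChange.

Section SecondDerivativeSignChange.
Variables (f f' f'' : R -> R) (z : R).
Hypothesis f_deriv : forall x, is_derive f x (f' x).
Hypothesis f'_deriv : forall x, is_derive f' x (f'' x).
Hypothesis f''_neg_left : forall x, x < z -> f'' x < 0.
Hypothesis f''_zero : f'' z = 0.
Hypothesis f''_pos_right : forall x, z < x -> 0 < f'' x.

Lemma concave_on_left_of : concave_on (fun x => x <= z) f.
Proof.
  apply (concave_on_deriv2_nonpos f f' f''); auto.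
  - intros x y w Hx Hy Hw. lra.
  - intros x Hx. destruct (Rle_lt_or_eq_dec x z Hx) as [Hlt | ->]; [|lra].
    left. now apply f''_neg_left.
Qed.

Lemma convex_on_right_of : convex_on (fun x => z <= x) f.
Proof.
  apply (convex_on_deriv2_nonneg f f' f''); auto.
  - intros x y w Hx Hy Hw. lra.
  - intros x Hx. destruct (Rle_lt_or_eq_dec z x Hx) as [Hlt | <-]; [|lra].
    left. now apply f''_pos_right.
Qed.

Lemma not_convex_near_left_of c eps : c < z -> 0 < eps ->
  ~ convex_on (fun x => c - eps < x <= c) f /\ ~ convex_on (fun x => c <= x < c + eps) f.
Proof.
  intros Hcz Heps.
  destruct (ex_pos_le_both eps (z - c) Heps ltac:(lra)) as [m Hm].
  split.
  - apply (not_convex_on_deriv2_neg f f' f'' f_deriv f'_deriv _ (c - eps / 2) c); auto; try lra.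
    intros w Hw. apply f''_neg_left. lra.
  - apply (not_convex_on_deriv2_neg f f' f'' f_deriv f'_deriv _ c (c + m / 2)); auto; try lra.
    intros w Hw. apply f''_neg_left. lra.
Qed.

Lemma not_concave_near_right_of c eps : z < c -> 0 < eps ->
  ~ concave_on (fun x => c - eps < x <= c) f /\ ~ concave_on (fun x => c <= x < c + eps) f.
Proof.
  intros Hzc Heps.
  destruct (ex_pos_le_both eps (c - z) Heps ltac:(lra)) as [m Hm].
  split.
  - apply (not_concave_on_deriv2_pos f f' f'' f_deriv f'_deriv _ (c - m / 2) c); auto; try lra.
    intros w Hw. apply f''_pos_right. lra.
  - apply (not_concave_on_deriv2_pos f f' f'' f_deriv f'_deriv _ c (c + eps / 2)); auto; try lra.
    intros w Hw. apply f''_pos_right. lra.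
Qed.

Lemma inflection_point_iff c : inflection_point f c <-> c = z.
Proof.
  split.
  - intros [eps [Heps Hcases]].
    destruct (Rtotal_order c z) as [Hcz|[Hcz|Hzc]]; [exfalso | exact Hcz | exfalso].
    + destruct (not_convex_near_left_of c eps Hcz Heps). tauto.
    + destruct (not_concave_near_right_of c eps Hzc Heps). unfold concave_on in *. tauto.
  - intros ->. exists 1. split; [lra|]. left. split.
    + intros x y t Hx Hy Ht. apply concave_on_left_of; tauto.
    + intros x y t Hx Hy Ht. apply convex_on_right_of; tauto.
Qed.
End SecondDerivativeSignChange.

Section TotalFunction.
Variables (Cp0 Tp0 Cm Tm : R) (Cp Tp : nat -> R) (N : nat).

Definition pos_coeff (i : nat) : R := match i with O => Cp0 | S _ => Cp i end.
Definition pos_base (i : nat) : R := match i with O => Tp0 | S _ => Tp i end.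

Definition total_deriv (n : nat) (k : R) : R :=
  expsum (fun i => pos_coeff i * ln (pos_base i) ^ n) (fun i => ln (pos_base i)) N k
  - Cm * ln Tm ^ n * exp (k * ln Tm).

Lemma total_fun_total_deriv k : total_fun Cp0 Tp0 Cm Tm Cp Tp N k = total_deriv 0 k.
Proof.
  unfold total_fun, total_deriv, expsum, Rpower.
  rewrite (sum1N_ext (fun i => Cp i * exp (k * ln (Tp i)))
             (fun i => pos_coeff i * ln (pos_base i) ^ 0 * exp (k * ln (pos_base i)))).
  - simpl. ring.
  - intros [|i] Hi; [lia|]. simpl. ring.
Qed.

Lemma is_derive_total_deriv n k : is_derive (total_deriv n) k (total_deriv (S n) k).
Proof.
  unfold total_deriv.
  rewrite (expsum_ext _ (fun i => pos_coeff i * ln (pos_base i) ^ n * ln (pos_base i)))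
    by (intros i; simpl; ring).
  apply (is_derive_minus (expsum _ _ N)); [apply is_derive_expsum|].
  auto_derive; [exact I | simpl; ring].
Qed.

Lemma total_deriv_factor n k :
  (-1) ^ n * total_deriv n k = exp (k * ln Tm) *
    (expsum (fun i => pos_coeff i * (- ln (pos_base i)) ^ n)
            (fun i => ln (pos_base i) - ln Tm) N k - Cm * (- ln Tm) ^ n).
Proof.
  assert (Hopp : forall x, (- x) ^ n = (-1) ^ n * x ^ n)
    by (intros x; rewrite <- Rpow_mult_distr; f_equal; ring).
  unfold total_deriv. rewrite Rmult_minus_distr_l, expsum_scal, (expsum_shift _ _ _ (ln Tm)).
  rewrite (expsum_ext _ (fun i => pos_coeff i * (- ln (pos_base i)) ^ n))
    by (intros i; rewrite Hopp; ring).
  rewrite Hopp. ring.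
Qed.

Hypothesis Cm_pos : 0 < Cm.
Hypothesis Tm_pos : 0 < Tm.
Hypothesis pos_terms : forall i, (i <= N)%nat -> 0 < pos_coeff i /\ Tm < pos_base i < 1.

Lemma ln_pos_base_bounds i : (i <= N)%nat -> ln Tm < ln (pos_base i) < 0.
Proof.
  intros Hi. destruct (pos_terms i Hi) as [_ [Hlo Hhi]].
  rewrite <- ln_1. split; apply ln_increasing; lra.
Qed.

Lemma total_deriv_sign_change n : exists z, total_deriv n z = 0 /\
  (forall k, k < z -> (-1) ^ n * total_deriv n k < 0) /\
  (forall k, z < k -> 0 < (-1) ^ n * total_deriv n k).
Proof.
  assert (Hlm : 0 < - ln Tm).
  { destruct (ln_pos_base_bounds 0 (Nat.le_0_l N)). lra. }
  destruct (expsum_crosses (fun i => pos_coeff i * (- ln (pos_base i)) ^ n)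
              (fun i => ln (pos_base i) - ln Tm) N) with (B := Cm * (- ln Tm) ^ n)
    as [z [Hz [Hleft Hright]]].
  - intros i Hi. destruct (pos_terms i Hi) as [Hc _]. destruct (ln_pos_base_bounds i Hi).
    split; [apply Rmult_lt_0_compat; [exact Hc | apply pow_lt; lra] | lra].
  - apply Rmult_lt_0_compat; [exact Cm_pos | now apply pow_lt].
  - exists z. repeat split.
    + apply (Rmult_eq_reg_l ((-1) ^ n)); [| apply pow_nonzero; lra].
      rewrite total_deriv_factor, Hz. ring.
    + intros k Hk. rewrite total_deriv_factor.
      specialize (Hleft k Hk). pose proof (exp_pos (k * ln Tm)). nra.
    + intros k Hk. rewrite total_deriv_factor.
      specialize (Hright k Hk). pose proof (exp_pos (k * ln Tm)). nra.
Qed.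

Lemma is_lim_total_deriv_0 : is_lim (total_deriv 0) p_infty 0.
Proof.
  replace (Finite 0) with (Finite (0 - Cm * ln Tm ^ 0 * 0)) by (f_equal; ring).
  apply (is_lim_minus' (expsum _ _ N)).
  - apply is_lim_expsum_0. intros i Hi.
    apply is_Rbar_mult_p_infty_neg. simpl. apply ln_pos_base_bounds, Hi.
  - apply is_lim_scal_l with (l := Finite 0), is_lim_exp_mul_0, is_Rbar_mult_p_infty_neg.
    simpl. destruct (ln_pos_base_bounds 0 (Nat.le_0_l N)). lra.
Qed.
End TotalFunction.

Theorem lemma3 (Cp0 Tp0 Cm Tm : R) (Cp Tp : nat -> R) (N : nat) :
  0 < Cp0 -> 0 < Cm -> 0 < Tm -> Tm < Tp0 -> Tp0 < 1 ->
  (forall i, (1 <= i <= N)%nat -> 0 < Cp i /\ Tm < Tp i /\ Tp i < 1) ->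
  let S := total_fun Cp0 Tp0 Cm Tm Cp Tp N in
  (exists! k, S k = 0) /\
  (exists! k, local_max S k) /\
  (exists! c, inflection_point S c) /\
  (forall c, inflection_point S c ->
     concave_on (fun x => x <= c) S /\ convex_on (fun x => c <= x) S) /\
  is_lim S p_infty 0.
Proof.
  intros HCp0 HCm HTm HTmTp0 HTp0 HCpTp S.
  assert (Hterms : forall i, (i <= N)%nat ->
            0 < pos_coeff Cp0 Cp i /\ Tm < pos_base Tp0 Tp i < 1).
  { intros [|i] Hi; simpl; [lra | apply HCpTp; lia]. }
  set (D := total_deriv Cp0 Tp0 Cm Tm Cp Tp N).
  assert (HS : forall k, S k = D 0%nat k) by apply total_fun_total_deriv.
  assert (HS' : forall k, is_derive S k (D 1%nat k)).
  { intros k. apply (is_derive_ext (D 0%nat)); [intros; now rewrite HS|].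
    apply is_derive_total_deriv. }
  assert (HS'' : forall k, is_derive (D 1%nat) k (D 2%nat k)) by apply is_derive_total_deriv.
  destruct (total_deriv_sign_change _ _ _ _ _ _ _ HCm HTm Hterms 0) as [z0 [Hz0 [Hl0 Hr0]]].
  destruct (total_deriv_sign_change _ _ _ _ _ _ _ HCm HTm Hterms 1) as [z1 [_ [Hl1 Hr1]]].
  destruct (total_deriv_sign_change _ _ _ _ _ _ _ HCm HTm Hterms 2) as [z2 [Hz2 [Hl2 Hr2]]].
  fold D in Hz0, Hl0, Hr0, Hl1, Hr1, Hz2, Hl2, Hr2. simpl in Hl0, Hr0, Hl1, Hr1, Hl2, Hr2.
  assert (Hinc : forall k, k < z1 -> 0 < D 1%nat k) by (intros k Hk; specialize (Hl1 k Hk); lra).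
  assert (Hdec : forall k, z1 < k -> D 1%nat k < 0) by (intros k Hk; specialize (Hr1 k Hk); lra).
  assert (Hconc : forall k, k < z2 -> D 2%nat k < 0) by (intros k Hk; specialize (Hl2 k Hk); lra).
  assert (Hconv : forall k, z2 < k -> 0 < D 2%nat k) by (intros k Hk; specialize (Hr2 k Hk); lra).
  assert (Hmax : forall x, local_max S x <-> x = z1) by now apply (local_max_iff S (D 1%nat)).
  assert (Hinfl : forall c, inflection_point S c <-> c = z2)
    by now apply (inflection_point_iff S (D 1%nat) (D 2%nat)).
  split; [|split; [|split; [|split]]].
  - exists z0. split; [now rewrite HS|].
    intros k Hk. rewrite HS in Hk.
    destruct (Rtotal_order k z0) as [Hlt|[Heq|Hgt]]; auto.
    + specialize (Hl0 k Hlt). lra.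
    + specialize (Hr0 k Hgt). lra.
  - exists z1. split; [now apply Hmax | intros x Hx; symmetry; now apply Hmax].
  - exists z2. split; [now apply Hinfl | intros c Hc; symmetry; now apply Hinfl].
  - intros c Hc. apply Hinfl in Hc. subst c. split.
    + now apply (concave_on_left_of S (D 1%nat) (D 2%nat)).
    + now apply (convex_on_right_of S (D 1%nat) (D 2%nat)).
  - apply (is_lim_ext (D 0%nat)); [intros; now rewrite HS|].
    now apply is_lim_total_deriv_0.
Qed.
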